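(* Let $G\cong G_1\odot G_2$ be a corona graph where $G_1$ has no isolated vertices, and let $w=(w_0,\dots,w_l)$ with $w_0$ a positive integer and $w_1,\dots,w_l$ nonnegative integers. If $l\ge w_0\ge w_1\ge\cdots\ge w_l$ and $|V(G_2)|\ge w_0$, then $\gamma_w(G)=w_0\gamma(G)$.
   Context: All graphs are finite and simple; $N(v)$ denotes the open neighbourhood of $v$. For a vector $w=(w_0,\dots,w_l)$ of nonnegative integers with $w_0\ge1$, a function $f:V(G)\to\{0,\dots,l\}$ is a $w$-dominating function if $\sum_{u\in N(v)}f(u)\ge w_i$ for every vertex $v$ with $f(v)=i$. The weight is $\omega(f)=\sum_v f(v)$, and $\gamma_w(G)$ is the minimum weight of a $w$-dominating function on $G$. $\gamma(G)$ is the domination number. The corona product $G_1\odot G_2$ is obtained from one copy of $G_1$ and $|V(G_1)|$ copies of $G_2$ by joining every vertex of the $i$-th copy of $G_2$ to the $i$-th vertex of $G_1$. *)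

From mathcomp Require Import all_boot all_order.
Set Implicit Arguments. Unset Strict Implicit. Unset Printing Implicit Defensive.

Definition simple_graph (V : finType) (e : rel V) : Prop :=
  symmetric e /\ irreflexive e.

(* Corona product G1 ⊙ G2: vertices of G1 (inl) and, for each vertex i of G1,
   a copy of G2 (inr (i, x)). *)
Definition corona_vertex (V1 V2 : finType) : finType := (V1 + (V1 * V2))%type.

Definition corona_rel (V1 V2 : finType) (e1 : rel V1) (e2 : rel V2)
  : rel (corona_vertex V1 V2) :=
  fun u v =>
    match u, v with
    | inl a, inl b => e1 a b
    | inr (i, x), inr (j, y) => (i == j) && e2 x y
    | inl a, inr (i, _) => a == i
    | inr (i, _), inl a => i == a
    end.

Definition graph_iso (T U : finType) (e : rel T) (e' : rel U) (phi : T -> U) : Prop :=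
  bijective phi /\ forall x y, e x y = e' (phi x) (phi y).

Definition dominating (V : finType) (e : rel V) (S : {set V}) : bool :=
  [forall v, (v \in S) || [exists u in S, e v u]].

(* V itself is dominating, so the default #|V| is never smaller than the min. *)
Definition domination_number (V : finType) (e : rel V) : nat :=
  \big[minn/#|V|]_(S : {set V} | dominating e S) #|S|.

(* w-dominating functions for w = (w_0, ..., w_l), w : {ffun 'I_l.+1 -> nat};
   a function f : V -> {0,...,l} is represented as {ffun V -> 'I_l.+1}. *)
Definition w_dominating (V : finType) (e : rel V) (l : nat)
  (w : {ffun 'I_l.+1 -> nat}) (f : {ffun V -> 'I_l.+1}) : bool :=
  [forall v, w (f v) <= \sum_(u | e v u) (f u : nat)].

Definition fweight (V : finType) (l : nat) (f : {ffun V -> 'I_l.+1}) : nat :=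
  \sum_v (f v : nat).

(* Minimum weight of a w-dominating function.  The default l * #|V| is the
   largest possible weight, so it never undercuts an actual minimum. *)
Definition gamma_w (V : finType) (e : rel V) (l : nat) (w : {ffun 'I_l.+1 -> nat}) : nat :=
  \big[minn/(l * #|V|)]_(f : {ffun V -> 'I_l.+1} | w_dominating e w f) fweight f.

From mathcomp Require Import all_boot all_order.
Set Implicit Arguments. Unset Strict Implicit. Unset Printing Implicit Defensive.

(* Both parameters are invariant under isomorphism, so we may work on the
   corona itself.  For a vertex a of G1, the closed neighbourhood of every
   copy vertex (a, x) lies in the fibre {a} + {a} x V2.  Hence a dominating set
   meets every fibre, so gamma = |V1|, attained by V1.  Likewise a w-dominating
   f puts weight at least w0 on each fibre: either some (a, x) has value 0 and
   its neighbourhood inside the fibre carries weight at least w0, or all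
   |V2| >= w0 copy vertices have value at least 1.  Conversely, the value w0 on
   V1 and 0 elsewhere is w-dominating, because G1 has no isolated vertices and
   w is largest at index 0. *)

Import Order.TTheory.

Section Minimizers.
Variables (V : finType) (e : rel V).

Lemma domination_number_le_card (S : {set V}) :
  dominating e S -> domination_number e <= #|S|.
Proof.
by move=> domS; rewrite /domination_number -minEnat -leEnat; exact: bigmin_le_cond.
Qed.

Lemma leq_domination_number k :
  k <= #|V| -> (forall S : {set V}, dominating e S -> k <= #|S|) ->
  k <= domination_number e.
Proof.
by move=> kV kS; rewrite /domination_number -minEnat -leEnat; apply/bigmin_geP.
Qed.

Variables (l : nat) (w : {ffun 'I_l.+1 -> nat}).

Lemma gamma_w_le_weight (f : {ffun V -> 'I_l.+1}) :
  w_dominating e w f -> gamma_w e w <= fweight f.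
Proof. by move=> wf; rewrite /gamma_w -minEnat -leEnat; exact: bigmin_le_cond. Qed.

Lemma leq_gamma_w k :
  k <= l * #|V| ->
  (forall f : {ffun V -> 'I_l.+1}, w_dominating e w f -> k <= fweight f) ->
  k <= gamma_w e w.
Proof. by move=> kV kf; rewrite /gamma_w -minEnat -leEnat; apply/bigmin_geP. Qed.

End Minimizers.

Section Isomorphism.
Variables (T U : finType) (e : rel T) (e' : rel U) (phi : T -> U).
Hypothesis iso : graph_iso e e' phi.

Let phi_bij : bijective phi := iso.1.
Let e_phi : forall x y, e x y = e' (phi x) (phi y) := iso.2.

Lemma sum_graph_iso (P : pred U) (F : U -> nat) :
  \sum_(u | P u) F u = \sum_(t | P (phi t)) F (phi t).
Proof. exact/reindex/onW_bij. Qed.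

Lemma dominating_iso (S : {set U}) :
  dominating e (phi @^-1: S) = dominating e' S.
Proof.
have [psi phiK psiK] := phi_bij.
apply/forallP/forallP => domS v.
  have /orP[| /existsP[t /andP[St evt]]] := domS (psi v).
    by rewrite inE psiK => ->.
  apply/orP; right; apply/existsP; exists (phi t).
  by rewrite inE in St; rewrite St -[v]psiK -e_phi.
have /orP[Sv | /existsP[u /andP[Su evu]]] := domS (phi v); first by rewrite inE Sv.
apply/orP; right; apply/existsP; exists (psi u).
by rewrite inE psiK Su e_phi psiK.
Qed.

Lemma domination_number_iso : domination_number e = domination_number e'.
Proof.
have [psi phiK psiK] := phi_bij.
rewrite /domination_number (bij_eq_card phi_bij) -!minEnat.
rewrite (reindex (fun S : {set U} => phi @^-1: S)) /=; last first.
  exists (fun S : {set T} => psi @^-1: S) => S _;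
    by apply/setP => x; rewrite !inE ?psiK ?phiK.
apply: eq_big => S; first exact: dominating_iso.
by move=> _; apply: on_card_preimset; apply/onW_bij.
Qed.

Variables (l : nat) (w : {ffun 'I_l.+1 -> nat}).

Let pullback (g : {ffun U -> 'I_l.+1}) : {ffun T -> 'I_l.+1} :=
  [ffun t => g (phi t)].

Lemma w_dominating_iso g : w_dominating e w (pullback g) = w_dominating e' w g.
Proof.
have [psi phiK psiK] := phi_bij.
have nbr v :
    \sum_(t | e v t) (pullback g t : nat) = \sum_(u | e' (phi v) u) (g u : nat).
  by rewrite sum_graph_iso; apply: eq_big => [t|t _]; rewrite ?e_phi ?ffunE.
apply/forallP/forallP => wg v; last by rewrite nbr ffunE.
by have := wg (psi v); rewrite nbr ffunE psiK.
Qed.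

Lemma fweight_iso g : fweight (pullback g) = fweight g.
Proof. by rewrite /fweight sum_graph_iso; apply: eq_bigr => t _; rewrite ffunE. Qed.

Lemma gamma_w_iso : gamma_w e w = gamma_w e' w.
Proof.
have [psi phiK psiK] := phi_bij.
rewrite /gamma_w (bij_eq_card phi_bij) -!minEnat (reindex pullback) /=; last first.
  exists (fun f => [ffun u => f (psi u)]) => f _;
    by apply/ffunP => x; rewrite !ffunE ?psiK ?phiK.
by apply: eq_big => g; [exact: w_dominating_iso | rewrite fweight_iso].
Qed.

End Isomorphism.

Section Corona.
Variables (V1 V2 : finType) (e1 : rel V1) (e2 : rel V2).
Local Notation V := (corona_vertex V1 V2).
Local Notation G := (corona_rel e1 e2).

Definition corona_root (v : V) : V1 := match v with inl a | inr (a, _) => a end.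

Lemma corona_root_nbr_inr a x u : G (inr (a, x)) u -> corona_root u = a.
Proof. by case: u => [b /eqP | [b y] /andP[/eqP]]. Qed.

Lemma sum_corona_fiber (F : V -> nat) a :
  \sum_(v | corona_root v == a) F v = F (inl a) + \sum_x F (inr (a, x)).
Proof.
rewrite big_sumType /= big_pred1_eq.
rewrite -(big_pred1_eq addn a (fun b => \sum_x F (inr (b, x)))) pair_big /=.
by congr (_ + _); apply: eq_big => [[b x]|[b x]] //=; rewrite andbT.
Qed.

Lemma sum_corona (F : V -> nat) :
  \sum_v F v = \sum_a (F (inl a) + \sum_x F (inr (a, x))).
Proof.
rewrite (partition_big corona_root xpredT) //=.
by apply: eq_bigr => a _; rewrite sum_corona_fiber.
Qed.

Lemma card_V1_le_corona : #|V1| <= #|V|.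
Proof. by rewrite card_sum leq_addr. Qed.

Lemma domination_number_corona : 0 < #|V2| -> domination_number G = #|V1|.
Proof.
case/card_gt0P=> x0 _; apply/eqP; rewrite eqn_leq; apply/andP; split.
  rewrite -cardsT -(card_imset setT (@inl_inj V1 (V1 * V2))).
  apply: domination_number_le_card; apply/forallP => -[a | [a x]].
    by rewrite imset_f.
  by apply/orP; right; apply/existsP; exists (inl a); rewrite imset_f /=.
apply: leq_domination_number card_V1_le_corona _ => S domS.
have root_onto : corona_root @: S = setT.
  apply/setP => a; rewrite inE.
  have /orP[Sv | /existsP[u /andP[Su]]] := forallP domS (inr (a, x0)).
    by rewrite -[a]/(corona_root (inr (a, x0))) imset_f.
  by move/corona_root_nbr_inr <-; rewrite imset_f.
by rewrite -cardsT -root_onto leq_imset_card.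
Qed.

Variables (l : nat) (w : {ffun 'I_l.+1 -> nat}).
Local Notation w0 := (w ord0).

Lemma fiber_weight_w_dominating (f : {ffun V -> 'I_l.+1}) a :
  w_dominating G w f -> w0 <= #|V2| ->
  w0 <= \sum_(v | corona_root v == a) (f v : nat).
Proof.
move=> /forallP wf w0_le_V2.
have [/existsP[x /eqP fx0] | /existsPn f_pos] :=
  boolP [exists x, f (inr (a, x)) == ord0].
  have := wf (inr (a, x)); rewrite fx0 => /leq_trans; apply.
  by apply: (sub_le_big leqnn (fun m n => leq_addr n m)) => u /corona_root_nbr_inr ->.
rewrite sum_corona_fiber (leq_trans w0_le_V2) // -sum1_card.
apply: leq_trans (leq_addl _ _); apply: leq_sum => x _.
by rewrite lt0n; apply: contra (f_pos x) => /eqP f0; apply/eqP/val_inj.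
Qed.

Lemma gamma_w_corona :
  (forall a : V1, exists b : V1, e1 a b) ->
  w0 <= l -> (forall i, w i <= w0) -> w0 <= #|V2| ->
  gamma_w G w = w0 * #|V1|.
Proof.
move=> no_isolated w0_le_l w_le_w0 w0_le_V2.
apply/eqP; rewrite eqn_leq; apply/andP; split.
  pose f0 : {ffun V -> 'I_l.+1} :=
    [ffun v => if v is inl _ then inord w0 else ord0].
  have f0_inl a : f0 (inl a) = w0 :> nat by rewrite ffunE inordK // ltnS.
  have le_nbr v u : G v u -> f0 u <= \sum_(u' | G v u') (f0 u' : nat).
    by move=> vu; rewrite (bigD1 u) //= leq_addr.
  have -> : w0 * #|V1| = fweight f0.
    rewrite /fweight sum_corona -sum1_card big_distrr /=.
    apply: eq_bigr => a _; rewrite f0_inl big1 ?muln1 ?addn0 // => x _.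
    by rewrite ffunE.
  apply: gamma_w_le_weight; apply/forallP => -[a | [a x]].
    have [b ab] := no_isolated a.
    by rewrite (leq_trans (w_le_w0 _)) // -(f0_inl b) le_nbr.
  by rewrite ffunE -(f0_inl a) le_nbr /=.
apply: leq_gamma_w => [|f wf]; first by rewrite leq_mul // card_V1_le_corona.
rewrite /fweight (partition_big corona_root xpredT) //= -sum1_card big_distrr /=.
by apply: leq_sum => a _; rewrite muln1 fiber_weight_w_dominating.
Qed.

End Corona.

Theorem theorem7
  (V1 V2 T : finType) (e1 : rel V1) (e2 : rel V2) (e : rel T)
  (phi : T -> corona_vertex V1 V2)
  (l : nat) (w : {ffun 'I_l.+1 -> nat}) :
  simple_graph e1 -> simple_graph e2 -> simple_graph e ->
  graph_iso e (corona_rel e1 e2) phi ->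
  (forall a : V1, exists b : V1, e1 a b) ->
  0 < w ord0 ->
  w ord0 <= l ->
  (forall i j : 'I_l.+1, i <= j -> w j <= w i) ->
  w ord0 <= #|V2| ->
  gamma_w e w = w ord0 * domination_number e.
Proof.
move=> _ _ _ iso no_isolated w0_gt0 w0_le_l w_mono w0_le_V2.
rewrite (gamma_w_iso iso) (domination_number_iso iso).
rewrite domination_number_corona ?(leq_trans w0_gt0 w0_le_V2) //.
by apply: gamma_w_corona => // i; apply: w_mono.
Qed.
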